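(* Let $W$ be a finite set and $\mathtt{N}=\{N_1,\ldots,N_r\}$ a sequence of subsets of $W$. Then $$|K(\mathtt{N})|\simeq\begin{cases}S^{|W|-1}&\text{if }N_1\cup\cdots\cup N_r=W,\\ *&\text{otherwise},\end{cases}$$ where $S^{-1}=\emptyset$. Moreover, if $\mathtt{M}=\{M_1,\ldots,M_r\}$ is a sequence of subsets of $W$ with $M_i\subset N_i$ for all $i$ and $M_1\cup\cdots\cup M_r=W$, then the inclusion $|K(\mathtt{M})|\to|K(\mathtt{N})|$ is a homotopy equivalence.
   Context: For a sequence $\mathtt{N}=\{N_1,\ldots,N_r\}$ of subsets of a finite set $W$ (repetitions allowed), choose distinct points $a_1,\ldots,a_r\notin W$, set $\widetilde{N}_i=N_i\sqcup\{a_i\}$; $K(\mathtt{N})$ is the simplicial complex on $W\sqcup\{a_1,\ldots,a_r\}$ whose minimal non-faces are exactly $\widetilde{N}_1,\ldots,\widetilde{N}_r$ (faces: subsets containing no $\widetilde{N}_i$). $K(\mathtt{M})$ is formed with the same points $a_i$, so $K(\mathtt{M})\subset K(\mathtt{N})$ when $M_i\subset N_i$. $|L|$ denotes geometric realization. *)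

From HB Require Import structures.
From mathcomp Require Import all_boot all_order all_algebra.
From mathcomp Require Import all_classical all_reals topology normedtype.
Import numFieldNormedType.Exports.
Set Implicit Arguments. Unset Strict Implicit. Unset Printing Implicit Defensive.
Import Order.TTheory GRing.Theory Num.Theory.
Local Open Scope classical_set_scope.
Local Open Scope ring_scope.

Section Homotopy.
Context (R : realType).

Definition cont_map {X Y : topologicalType} (f : X -> Y) (A : set X) (B : set Y) :=
  {within A, continuous f} /\ f @` A `<=` B.

Definition homotopic {X Y : topologicalType} (A : set X) (B : set Y) (f0 f1 : X -> Y) :=
  exists H : R * X -> Y,
    cont_map H (`[0, 1] `*` A) B /\
    (forall x, A x -> H (0, x) = f0 x) /\
    (forall x, A x -> H (1, x) = f1 x).

Definition homotopy_equivalence {X Y : topologicalType} (f : X -> Y) (A : set X) (B : set Y) :=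
  cont_map f A B /\
  exists g : Y -> X, cont_map g B A /\
    homotopic A A (g \o f) id /\ homotopic B B (f \o g) id.

Definition homotopy_equiv {X Y : topologicalType} (A : set X) (B : set Y) :=
  exists f : X -> Y, homotopy_equivalence f A B.

End Homotopy.

(** The complex K(N) on W ⊔ {a_1..a_r}: vertices W + 'I_r, with a_i = inr i. *)
Section Complex.
Context {W : finType} {r : nat}.

Definition Ntilde (N : 'I_r -> {set W}) (i : 'I_r) : {set W + 'I_r} :=
  (@inl W 'I_r) @: N i :|: [set inr i].

Definition is_face (N : 'I_r -> {set W}) (s : {set W + 'I_r}) : bool :=
  [forall i, ~~ (Ntilde N i \subset s)].

(** geometric realization |K(N)| inside R^(W ⊔ {a_i}) with the product topology ({ptws _ -> R}):
    points of the standard simplex whose support is a face. *)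
Definition realization (R : realType) (N : 'I_r -> {set W}) : set {ptws W + 'I_r -> R} :=
  [set x | (forall v, 0 <= x v) /\ (\sum_v x v = 1) /\
           is_face N [set v | x v != 0]].
End Complex.

(** the unit unit_sphere S^(|W|-1) in R^W (empty when W is empty). *)
Definition unit_sphere (R : realType) (W : finType) : set {ptws W -> R} :=
  [set x | \sum_w (x w) ^+ 2 = 1].

Definition one_point (R : realType) (W : finType) : set {ptws W -> R} :=
  [set (fun _ => 0)].

Arguments realization {W r} R N _.
Arguments unit_sphere : clear implicits.
Arguments one_point : clear implicits.
Arguments cont_map {X Y} f A B.
Arguments homotopic R {X Y} A B f0 f1.
Arguments homotopy_equivalence R {X Y} f A B.
Arguments homotopy_equiv R {X Y} A B.

From HB Require Import structures.
From mathcomp Require Import all_boot all_order all_algebra.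
From mathcomp Require Import all_classical all_reals topology normedtype realfun.
From mathcomp Require Import ring lra.
Import numFieldNormedType.Exports.
Set Implicit Arguments. Unset Strict Implicit. Unset Printing Implicit Defensive.
Import Order.TTheory GRing.Theory Num.Theory.
Local Open Scope classical_set_scope.
Local Open Scope ring_scope.

(* A point of |K(N)| is a probability vector on W ⊔ {a_i} in which an apex
   a_i may carry weight only if some w ∈ N_i carries none.

   If some w0 lies in no N_i, adding w0 to a face gives a face, so |K(N)| is a
   cone with apex w0 and contracts to it along straight lines.

   If M_i ⊆ N_i and M covers W, lower each W-coordinate of x by t times the
   total apex weight (clipping at 0) and hand the clipped mass of w to the
   apices a_i with w ∈ M_i.  After normalisation this is a homotopy inside
   |K(N)| from the identity (t = 0) to a retraction onto |K(M)| (t = 1): an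
   apex a_i only gains weight from some w ∈ M_i whose own weight was clipped to
   0, and since M covers W the total weight never vanishes.

   If N covers W, the W-coordinates of a point of |K(N)| are never all equal to
   β = 1/(|W|+1), so projecting them radially from β lands on S^{|W|-1}.  A
   sphere point y is sent back to the weights max(0, y_w + Σy) on w and
   Σ_{w ∈ N_i} max(0, - y_w - Σy) on a_i.  The round trip on |K(N)| is exactly
   the retraction above for M = N, and the round trip on the sphere never sends
   y to a negative multiple of itself, so normalised straight lines join it to
   the identity. *)

Section ContinuousAt.
Context (R : realType) (T : topologicalType) (p : T).

Definition cont_at (f : T -> R) := {for p, continuous f}.

Lemma cont_at_cst c : cont_at (fun=> c).
Proof. exact: cvg_cst. Qed.

Lemma cont_atD f g : cont_at f -> cont_at g -> cont_at (fun x => f x + g x).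
Proof. exact: cvgD. Qed.

Lemma cont_atN f : cont_at f -> cont_at (fun x => - f x).
Proof. exact: cvgN. Qed.

Lemma cont_atB f g : cont_at f -> cont_at g -> cont_at (fun x => f x - g x).
Proof. by move=> hf hg; apply: cont_atD => //; apply: cont_atN. Qed.

Lemma cont_atM f g : cont_at f -> cont_at g -> cont_at (fun x => f x * g x).
Proof. exact: cvgM. Qed.

Lemma cont_atV f : f p != 0 -> cont_at f -> cont_at (fun x => (f x)^-1).
Proof. exact: cvgV. Qed.

Lemma cont_at_max f g :
  cont_at f -> cont_at g -> cont_at (fun x => Num.max (f x) (g x)).
Proof. exact: continuous_max. Qed.

Lemma cont_at_sqrt f : cont_at f -> cont_at (fun x => Num.sqrt (f x)).
Proof. by move=> hf; apply: continuous_comp hf _; exact: sqrt_continuous. Qed.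

Lemma cont_at_sum (I : Type) (s : seq I) (P : pred I) (F : I -> T -> R) :
  (forall i, cont_at (F i)) -> cont_at (fun x => \sum_(i <- s | P i) F i x).
Proof.
move=> hF; elim: s => [|i s IH].
  by under eq_fun do rewrite big_nil; exact: cont_at_cst.
under eq_fun do rewrite big_cons.
by case: (P i) => //; exact: cont_atD.
Qed.

Lemma cont_at_ptws (V : Type) (f : T -> {ptws V -> R}) :
  (forall v, cont_at (fun x => f x v)) -> {for p, continuous f}.
Proof.
move=> hf; apply/cvg_sup => v A /=.
rewrite nbhsE => -[B [[C Cop CB] Bfp] sBA].
have /hf : nbhs (f p v) C by apply: open_nbhs_nbhs; split => //; rewrite -CB in Bfp.
rewrite nbhs_simpl /= nbhsE => -[D oD sD].
by exists D => // x Dx; apply: sBA; rewrite -CB; exact: sD.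
Qed.

End ContinuousAt.

Lemma cont_at_eval (R : realType) (V : eqType) (v : V) (x : {ptws V -> R}) :
  cont_at x (fun y : {ptws V -> R} => y v).
Proof. exact: (@proj_continuous V (fun=> R) v x). Qed.

Lemma cont_at_coord (R : realType) (T : topologicalType) (p : T) (V : eqType)
    (v : V) (f : T -> {ptws V -> R}) :
  {for p, continuous f} -> cont_at p (fun x => f x v).
Proof.
by move=> hf; exact: continuous_comp hf (@proj_continuous V (fun=> R) v (f p)).
Qed.

Lemma cont_at_fst (R : realType) (Y : topologicalType) (q : R * Y) :
  cont_at q (fun z : R * Y => z.1).
Proof. exact: cvg_fst. Qed.

Lemma sumr_ge_term (R : realType) (I : finType) (F : I -> R) i :
  (forall j, 0 <= F j) -> F i <= \sum_j F j.
Proof. by move=> F0; rewrite (bigD1 i) //= lerDl; exact: sumr_ge0. Qed.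

Section Lerp.
Context (R : realType) (V : eqType).

Definition lerp (t : R) (a b : V -> R) : {ptws V -> R} :=
  fun v => (1 - t) * a v + t * b v.

Lemma lerpE t (a b : V -> R) v : lerp t a b v = (1 - t) * a v + t * b v.
Proof. by []. Qed.

Lemma lerp0 (a b : V -> R) : lerp 0 a b = a.
Proof. by apply: funext => v; rewrite /lerp subr0 mul1r mul0r addr0. Qed.

Lemma lerp1 (a b : V -> R) : lerp 1 a b = b.
Proof. by apply: funext => v; rewrite /lerp subrr mul0r mul1r add0r. Qed.

Lemma lerp_cont_at (T : topologicalType) (p : T) (t : T -> R)
    (a b : T -> {ptws V -> R}) :
  cont_at p t -> {for p, continuous a} -> {for p, continuous b} ->
  {for p, continuous (fun z => lerp (t z) (a z) (b z))}.
Proof.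
move=> ht ha hb; apply: cont_at_ptws => v.
apply: cont_atD; apply: cont_atM => //; try exact: cont_at_coord.
by apply: cont_atB => //; exact: cont_at_cst.
Qed.

End Lerp.

Lemma contractible_one_point (R : realType) (W : finType) (X : topologicalType)
    (A : set X) (e : X) :
  A e -> homotopic R A A (fun=> e) id -> homotopy_equiv R A (one_point R W).
Proof.
move=> Ae hA; pose o : {ptws W -> R} := fun=> 0.
exists (fun=> o); split.
  split; first by apply: continuous_subspaceT => x; exact: cst_continuous.
  by move=> _ [x _ <-].
exists (fun=> e); split; last split.
- split; first by apply: continuous_subspaceT => y; exact: cst_continuous.
  by move=> _ [y _ <-].
- exact: hA.
- exists (fun=> o); split; last by split => // y ->.
  split; first by apply: continuous_subspaceT => q; exact: cst_continuous.
  by move=> _ [q _ <-].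
Qed.

Section Realization.
Context (R : realType) (W : finType) (r : nat).
Local Notation V := (W + 'I_r)%type.
Local Notation X := {ptws V -> R}.
Local Notation Y := {ptws W -> R}.
Implicit Types (P Q N : 'I_r -> {set W}) (x : X) (y : Y).

Definition covering Q := (\bigcup_(i < r) Q i = [set: W])%SET.

Lemma coveringP Q w : covering Q -> exists i, w \in Q i.
Proof.
move=> cov; have : w \in [set: W]%SET by rewrite inE.
by rewrite -cov => /bigcupP [i _ wQ]; exists i.
Qed.

Definition face_support Q (u : V -> R) :=
  forall i, u (inr i) != 0 -> exists2 w, w \in Q i & u (inl w) = 0.

Lemma faceP Q (S : {set V}) :
  reflect (forall i, inr i \in S -> exists2 w, w \in Q i & inl w \notin S)
          (is_face Q S).
Proof.
apply: (iffP forallP) => h i.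
  move=> iS; have := h i; rewrite /Ntilde finset.subUset finset.sub1set iS andbT.
  by case/fintype.subsetPn => v /imsetP [w wQ ->] wS; exists w.
rewrite /Ntilde finset.subUset finset.sub1set; apply/negP.
move=> /andP [/fintype.subsetP sub iS]; have [w wQ /negP] := h i iS.
by apply; apply: sub; exact: imset_f.
Qed.

Lemma realizationP Q x : realization R Q x <->
  [/\ forall v, 0 <= x v, \sum_v x v = 1 & face_support Q x].
Proof.
split=> [[x0 [x1 /faceP xf]]|[x0 x1 xf]].
  split => // i xi; have [|w wQ] := xf i; first by rewrite inE.
  by rewrite inE negbK => /eqP; exists w.
split=> //; split => //; apply/faceP => i; rewrite inE => /xf [w wQ xw].
by exists w => //; rewrite inE xw eqxx.
Qed.

Lemma realization_subset P Q x :
  (forall i, P i \subset Q i) -> realization R P x -> realization R Q x.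
Proof.
move=> PQ /realizationP [x0 x1 xf]; apply/realizationP; split => // i /xf [w wP xw].
by exists w => //; exact: (fintype.subsetP (PQ i)).
Qed.

Definition simplex_proj (u : V -> R) : X := fun v => u v / \sum_v' u v'.

Lemma simplex_proj_id (u : V -> R) : \sum_v u v = 1 -> simplex_proj u = u.
Proof. by move=> u1; apply: funext => v; rewrite /simplex_proj u1 divr1. Qed.

Lemma simplex_projZ (c : R) (u : V -> R) :
  c != 0 -> simplex_proj (fun v => c * u v) = simplex_proj u.
Proof.
move=> c0; apply: funext => v.
by rewrite /simplex_proj -mulr_sumr invfM mulrACA mulfV ?mul1r.
Qed.

Lemma simplex_proj_realization Q (u : V -> R) :
  (forall v, 0 <= u v) -> 0 < \sum_v u v -> face_support Q u ->
  realization R Q (simplex_proj u).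
Proof.
move=> u0 u_gt0 uf; apply/realizationP; split.
- by move=> v; rewrite divr_ge0 // ltW.
- by rewrite -mulr_suml mulfV // gt_eqF.
- move=> i; rewrite mulf_eq0 invr_eq0 (gt_eqF u_gt0) orbF => /uf [w wQ uw].
  by exists w => //; rewrite /simplex_proj uw mul0r.
Qed.

Lemma simplex_proj_cont_at (T : topologicalType) (p : T) (u : T -> V -> R) :
  (forall v, cont_at p (fun z => u z v)) -> 0 < \sum_v u p v ->
  {for p, continuous (fun z => simplex_proj (u z))}.
Proof.
move=> hu u_gt0; apply: cont_at_ptws => v; apply: cont_atM => //.
by apply: cont_atV; [rewrite gt_eqF | exact: cont_at_sum].
Qed.

Definition apex_weight x := \sum_i x (inr i).

Lemma apex_weight_ge0 x : (forall v, 0 <= x v) -> 0 <= apex_weight x.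
Proof. by move=> x0; apply: sumr_ge0. Qed.

Definition deform_weights P (t : R) x (v : V) : R :=
  match v with
  | inl w => Num.max 0 (x (inl w) - t * apex_weight x)
  | inr i => (1 - t) * x (inr i) +
             \sum_(w in P i) Num.max 0 (t * apex_weight x - x (inl w))
  end.

Definition deform P (q : R * X) : X := simplex_proj (deform_weights P q.1 q.2).

Lemma deform_weights_ge0 P t x : 0 <= t <= 1 -> (forall v, 0 <= x v) ->
  forall v, 0 <= deform_weights P t x v.
Proof.
move=> /andP [t0 t1] x0 [w|i] /=; first by rewrite le_max lexx.
apply: addr_ge0; first by apply: mulr_ge0 => //; rewrite subr_ge0.
by apply: sumr_ge0 => w _; rewrite le_max lexx.
Qed.

Lemma deform_weights_sum_gt0 P Q t x : covering P -> realization R Q x ->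
  0 <= t <= 1 -> 0 < \sum_v deform_weights P t x v.
Proof.
move=> cov hx t01; have /realizationP [x0 x1 xf] := hx.
suff [v wv] : exists v, 0 < deform_weights P t x v.
  by apply: lt_le_trans wv _; apply: sumr_ge_term; exact: deform_weights_ge0.
have [tau0|/eqP tau_neq0] := eqVneq (apex_weight x) 0.
  have : \sum_w x (inl w) <> 0.
    have -> : \sum_w x (inl w) = 1.
      rewrite -x1 big_sumType /=.
      by move: tau0; rewrite /apex_weight => ->; rewrite addr0.
    by apply/eqP; exact: oner_neq0.
  move=> /psumr_neq0P [w _|w /andP [_ xw]]; first exact: x0.
  by exists (inl w); rewrite /= tau0 mulr0 subr0 lt_max xw orbT.
have [i /andP [_ xi]] := psumr_neq0P (fun i _ => x0 (inr i)) tau_neq0.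
have [t1|t_neq1] := eqVneq t 1.
  have [w wQ xw] := xf i (lt0r_neq0 xi); have [j wP] := coveringP w cov.
  exists (inr j); rewrite /= t1 subrr mul0r add0r.
  apply: (@lt_le_trans _ _ (Num.max 0 (1 * apex_weight x - x (inl w)))).
    rewrite xw subr0 mul1r lt_max ltxx /= lt_def (apex_weight_ge0 x0) andbT.
    exact/eqP.
  by rewrite (bigD1 w) //= lerDl; apply: sumr_ge0 => w' _; rewrite le_max lexx.
exists (inr i) => /=; apply: (@lt_le_trans _ _ ((1 - t) * x (inr i))).
  by rewrite mulr_gt0 // subr_gt0 lt_neqAle t_neq1; case/andP: t01.
by rewrite lerDl; apply: sumr_ge0 => w _; rewrite le_max lexx.
Qed.

Lemma deform_weights_face_support P Q t x : (forall i, P i \subset Q i) ->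
  0 <= t -> (forall v, 0 <= x v) -> t = 1 \/ face_support Q x ->
  face_support Q (deform_weights P t x).
Proof.
move=> PQ t0 x0 hx i; rewrite /= => wi.
have apex_free : (1 - t) * x (inr i) = 0 ->
    exists2 w, w \in Q i & deform_weights P t x (inl w) = 0.
  move=> z; move: wi; rewrite z add0r => /eqP /(psumr_neq0P _) [].
    by move=> w _; rewrite le_max lexx.
  move=> w /andP [wP]; rewrite lt_max ltxx /= subr_gt0 => hw.
  exists w; first exact: (fintype.subsetP (PQ i)).
  by apply/eqP; rewrite eq_maxl subr_le0 ltW.
case: hx => [t1|xf]; first by apply: apex_free; rewrite t1 subrr mul0r.
have [xi|/xf [w wQ xw]] := eqVneq (x (inr i)) 0.
  by apply: apex_free; rewrite xi mulr0.
exists w => //=; apply/eqP; rewrite eq_maxl xw sub0r oppr_le0.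
by rewrite mulr_ge0 // apex_weight_ge0.
Qed.

Lemma deform_realization P Q t x : (forall i, P i \subset Q i) -> covering P ->
  realization R Q x -> 0 <= t <= 1 -> realization R Q (deform P (t, x)).
Proof.
move=> PQ cov hx t01; have /realizationP [x0 _ xf] := hx.
apply: simplex_proj_realization; first exact: deform_weights_ge0.
  exact: deform_weights_sum_gt0 hx t01.
by apply: deform_weights_face_support => //; [case/andP: t01 | right].
Qed.

Lemma deform1_realization P Q x : (forall i, P i \subset Q i) -> covering P ->
  realization R Q x -> realization R P (deform P (1, x)).
Proof.
move=> PQ cov hx; have /realizationP [x0 _ _] := hx.
have t01 : 0 <= (1 : R) <= 1 by rewrite ler01 lexx.
apply: simplex_proj_realization; first exact: deform_weights_ge0.
  exact: deform_weights_sum_gt0 hx t01.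
by apply: deform_weights_face_support => //; left.
Qed.

Lemma deform0 P Q x : realization R Q x -> deform P (0, x) = x.
Proof.
move=> /realizationP [x0 x1 _]; rewrite /deform /=.
have -> : deform_weights P 0 x = x.
  apply: funext => -[w|i] /=; rewrite mul0r subr0; first by rewrite max_r.
  rewrite mul1r big1 ?addr0 // => w _.
  by apply/eqP; rewrite sub0r eq_maxl oppr_le0.
exact: simplex_proj_id.
Qed.

Lemma deform_cont_at P (T : topologicalType) (p : T) (t : T -> R) (x : T -> X) :
  cont_at p t -> {for p, continuous x} ->
  0 < \sum_v deform_weights P (t p) (x p) v ->
  {for p, continuous (fun z => deform P (t z, x z))}.
Proof.
move=> ht hx w_gt0; rewrite /deform /=.
apply: (simplex_proj_cont_at (u := fun z => deform_weights P (t z) (x z))) w_gt0.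
move=> v.
have hxv v' : cont_at p (fun z => x z v') by exact: cont_at_coord.
have htau : cont_at p (fun z => apex_weight (x z)) by exact: cont_at_sum.
case: v => [w|i] /=.
  apply: cont_at_max; first exact: cont_at_cst.
  by apply: cont_atB => //; exact: cont_atM.
apply: cont_atD.
  by apply: cont_atM => //; apply: cont_atB => //; exact: cont_at_cst.
apply: cont_at_sum => w; apply: cont_at_max; first exact: cont_at_cst.
by apply: cont_atB => //; exact: cont_atM.
Qed.

Lemma deform_homotopic P Q : (forall i, P i \subset Q i) -> covering P ->
  homotopic R (realization R Q) (realization R Q) (fun x => deform P (1, x)) id.
Proof.
move=> PQ cov; exists (fun q : R * X => deform P (1 - q.1, q.2)).
have t01 (t : R) : `[0, 1]%classic t -> 0 <= 1 - t <= 1.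
  by rewrite /= in_itv /= => /andP [t0 t1]; apply/andP; split; lra.
split; [split|split].
- apply: continuous_in_subspaceT => q; rewrite in_setE => -[/t01 hq hx].
  apply: (deform_cont_at (t := fun q : R * X => 1 - q.1) (x := snd)).
  - by apply: cont_atB; [exact: cont_at_cst | exact: cont_at_fst].
  - exact: cvg_snd.
  - exact: deform_weights_sum_gt0 hx hq.
- by move=> _ [q [/t01 hq hx] <-]; exact: deform_realization.
- by move=> x _ /=; rewrite subr0.
- by move=> x hx /=; rewrite subrr (deform0 _ hx).
Qed.

Lemma realization_inclusion_equivalence (M N : 'I_r -> {set W}) :
  (forall i, M i \subset N i) -> covering M ->
  homotopy_equivalence R (fun x : X => x) (realization R M) (realization R N).
Proof.
move=> MN cov; split.
  split; first by apply: continuous_subspaceT => x; exact: cvg_id.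
  by move=> _ [x hx <-]; exact: realization_subset hx.
exists (fun x => deform M (1, x)); split; last split.
- split; last by move=> _ [x hx <-]; exact: deform1_realization hx.
  apply: continuous_in_subspaceT => x; rewrite in_setE => hx.
  have t01 : 0 <= (1 : R) <= 1 by rewrite ler01 lexx.
  apply: (@deform_cont_at _ _ _ (fun=> 1) id); first exact: cont_at_cst.
    exact: cvg_id.
  exact: deform_weights_sum_gt0 hx t01.
- exact: deform_homotopic (fun i => subxx (M i)) cov.
- exact: deform_homotopic MN cov.
Qed.

Lemma not_covering_uncovered Q : ~ covering Q -> exists w0, forall i, w0 \notin Q i.
Proof.
move=> ncov.
have /fintype.subsetPn [w0 _ hw0] : ~~ ([set: W] \subset \bigcup_(i < r) Q i)%SET.
  by rewrite finset.subTset; apply/eqP.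
by exists w0 => i; apply: contra hw0 => wQ; apply/bigcupP; exists i.
Qed.

Definition vertex (a : V) : X := fun v => if v == a then 1 else 0.

Lemma vertex_sum a : \sum_v vertex a v = 1.
Proof. by rewrite (bigD1 a) //= /vertex eqxx big1 ?addr0 // => v /negPf ->. Qed.

Lemma lerp_vertex_realization Q w0 t x : (forall i, w0 \notin Q i) ->
  0 <= t <= 1 -> realization R Q x -> realization R Q (lerp t (vertex (inl w0)) x).
Proof.
move=> hw0 /andP [t0 t1] /realizationP [x0 x1 xf]; apply/realizationP; split.
- move=> v; rewrite /lerp /vertex; apply: addr_ge0; apply: mulr_ge0 => //.
    by rewrite subr_ge0.
  by case: ifP.
- by rewrite /lerp big_split /= -!mulr_sumr vertex_sum x1; ring.
- move=> i; rewrite /lerp [vertex _ _]/= mulr0 add0r mulf_eq0 negb_or.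
  move=> /andP [_ /xf [w wQ xw]]; exists w => //; rewrite xw mulr0 addr0 /vertex.
  case: eqP => [[ew]|_]; last by rewrite mulr0.
  by move: (hw0 i); rewrite -ew wQ.
Qed.

Lemma uncovered_contractible Q w0 : (forall i, w0 \notin Q i) ->
  homotopy_equiv R (realization R Q) (one_point R W).
Proof.
move=> hw0; apply: (@contractible_one_point _ _ _ _ (vertex (inl w0))).
  apply/realizationP; split.
  - by move=> v; rewrite /vertex; case: ifP.
  - exact: vertex_sum.
  - by move=> i; rewrite [vertex _ _]/= eqxx.
exists (fun q : R * X => lerp q.1 (vertex (inl w0)) q.2); split; [split|split].
- apply: continuous_in_subspaceT => q _.
  apply: lerp_cont_at; first exact: cont_at_fst.
    exact: cst_continuous.
  exact: cvg_snd.
- move=> _ [q [+ hx] <-]; rewrite /= in_itv /= => t01.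
  exact: lerp_vertex_realization.
- by move=> x _ /=; rewrite lerp0.
- by move=> x _ /=; rewrite lerp1.
Qed.

Definition sphere_proj (u : W -> R) : Y :=
  fun w => u w / Num.sqrt (\sum_w' u w' ^+ 2).

Lemma sumsq_gt0 (u : W -> R) : (exists w, u w != 0) -> 0 < \sum_w u w ^+ 2.
Proof.
move=> [w uw]; apply: (@lt_le_trans _ _ (u w ^+ 2)).
  by rewrite lt_def sqr_ge0 sqrf_eq0 uw.
by apply: sumr_ge_term => j; exact: sqr_ge0.
Qed.

Lemma sphere_proj_unit (u : W -> R) :
  (exists w, u w != 0) -> unit_sphere R W (sphere_proj u).
Proof.
move=> /sumsq_gt0 u_gt0; rewrite /unit_sphere /= /sphere_proj.
under eq_bigr do rewrite expr_div_n sqr_sqrtr ?ltW //.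
by rewrite -mulr_suml mulfV // gt_eqF.
Qed.

Lemma sphere_proj_id y : unit_sphere R W y -> sphere_proj y = y.
Proof.
by move=> hy; apply: funext => w; rewrite /sphere_proj hy sqrtr1 divr1.
Qed.

Lemma sphere_proj_cont_at (T : topologicalType) (p : T) (u : T -> Y) :
  {for p, continuous u} -> (exists w, u p w != 0) ->
  {for p, continuous (fun z => sphere_proj (u z))}.
Proof.
move=> hu /sumsq_gt0 u_gt0; apply: cont_at_ptws => w; rewrite /sphere_proj.
have huw w' : cont_at p (fun z => u z w') by exact: cont_at_coord.
apply: cont_atM => //; apply: cont_atV; first by rewrite sqrtr_eq0 -ltNge.
apply: cont_at_sqrt; apply: cont_at_sum => w'.
by under eq_fun do rewrite expr2; exact: cont_atM.
Qed.

(* This value makes [from_sphere N \o to_sphere] coincide with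
   [deform N (1, _)], see [from_to_sphere]. *)
Definition beta : R := (#|W|.+1)%:R^-1.

Lemma beta_gt0 : 0 < beta.
Proof. by rewrite invr_gt0 ltr0n. Qed.

Lemma betaS : #|W|%:R * beta + beta = 1.
Proof. by rewrite -{2}(mul1r beta) -mulrDl natr1 mulfV // pnatr_eq0. Qed.

Definition to_sphere x : Y := sphere_proj (fun w => x (inl w) - beta).

Lemma to_sphere_neq0 Q x : realization R Q x -> exists w, x (inl w) - beta != 0.
Proof.
move=> /realizationP [x0 x1 xf].
have [//|/forallNP hall] := pselect (exists w, x (inl w) - beta != 0); exfalso.
have xb w : x (inl w) = beta.
  by apply/eqP; rewrite -subr_eq0; apply/negPn/negP => /(hall w).
have tau_beta : apex_weight x = beta.
  move: x1; rewrite big_sumType /=; under eq_bigr do rewrite xb.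
  by rewrite sumr_const -mulr_natl -/(apex_weight x) => h; have := betaS; lra.
have tau_neq0 : apex_weight x <> 0.
  by rewrite tau_beta; apply/eqP; rewrite gt_eqF ?beta_gt0.
have [i /andP [_ xi]] := psumr_neq0P (fun i _ => x0 (inr i)) tau_neq0.
have [w _] := xf i (lt0r_neq0 xi); rewrite xb => /eqP.
by rewrite gt_eqF // beta_gt0.
Qed.

Lemma to_sphereE Q x : realization R Q x ->
  exists2 c, 0 < c & forall w, to_sphere x w = (x (inl w) - beta) * c.
Proof.
move=> hx; exists (Num.sqrt (\sum_w (x (inl w) - beta) ^+ 2))^-1; last by [].
by rewrite invr_gt0 sqrtr_gt0 sumsq_gt0 //; exact: to_sphere_neq0 hx.
Qed.

Lemma to_sphere_unit Q x : realization R Q x -> unit_sphere R W (to_sphere x).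
Proof. by move=> hx; apply: sphere_proj_unit; exact: to_sphere_neq0 hx. Qed.

Lemma to_sphere_cont_at Q x : realization R Q x -> {for x, continuous to_sphere}.
Proof.
move=> hx.
apply: (sphere_proj_cont_at (u := fun z : X => (fun w => z (inl w) - beta) : Y)).
  apply: cont_at_ptws => w.
  by apply: cont_atB; [exact: cont_at_eval | exact: cont_at_cst].
exact: to_sphere_neq0 hx.
Qed.

Definition from_sphere_weights N y (v : V) : R :=
  match v with
  | inl w => Num.max 0 (y w + \sum_w' y w')
  | inr i => \sum_(w in N i) Num.max 0 (- y w - \sum_w' y w')
  end.

Definition from_sphere N y : X := simplex_proj (from_sphere_weights N y).

Lemma from_sphere_weights_ge0 N y v : 0 <= from_sphere_weights N y v.
Proof.
case: v => [w|i] /=; first by rewrite le_max lexx.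
by apply: sumr_ge0 => w _; rewrite le_max lexx.
Qed.

Lemma from_sphere_weights_sum_gt0 N y : covering N -> unit_sphere R W y ->
  0 < \sum_v from_sphere_weights N y v.
Proof.
move=> cov hy; rewrite lt_def sumr_ge0 ?andbT; last first.
  by move=> v _; exact: from_sphere_weights_ge0.
apply/negP => /eqP h0.
have z v : from_sphere_weights N y v = 0.
  by apply: (psumr_eq0P _ h0) => // v' _; exact: from_sphere_weights_ge0.
set s := \sum_w y w.
have ys w : y w = - s.
  have /eqP := z (inl w); rewrite /= -/s eq_maxl => h1.
  have [j wN] := coveringP w cov; have := z (inr j); rewrite /= -/s => h2.
  have /eqP : Num.max 0 (- y w - s) = 0.
    by apply: (psumr_eq0P _ h2) => // w' _; rewrite le_max lexx.
  by rewrite eq_maxl => h3; lra.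
have : (#|W|%:R + 1) * s = 0.
  have : s = \sum_(w : W) - s by apply: eq_bigr => w _; exact: ys.
  by rewrite sumr_const mulrDl mul1r mulr_natl mulNrn; lra.
move/eqP; rewrite mulf_eq0 natr1 pnatr_eq0 /= => /eqP s0.
move: hy; rewrite /unit_sphere /=; under eq_bigr do rewrite ys s0 oppr0 expr0n /=.
by rewrite big1 // => /eqP; rewrite eq_sym oner_eq0.
Qed.

Lemma from_sphere_realization N y : covering N -> unit_sphere R W y ->
  realization R N (from_sphere N y).
Proof.
move=> cov hy; apply: simplex_proj_realization.
- exact: from_sphere_weights_ge0.
- exact: from_sphere_weights_sum_gt0.
move=> i /= /eqP /(psumr_neq0P _) [].
  by move=> w _; rewrite le_max lexx.
move=> w /andP [wN]; rewrite lt_max ltxx /= subr_gt0 => hw.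
by exists w => //=; apply/eqP; rewrite eq_maxl; lra.
Qed.

Lemma from_sphere_cont_at N y : covering N -> unit_sphere R W y ->
  {for y, continuous (from_sphere N)}.
Proof.
move=> cov hy.
apply: (simplex_proj_cont_at (u := from_sphere_weights N)); last first.
  exact: from_sphere_weights_sum_gt0.
have hs : cont_at y (fun z : Y => \sum_w z w).
  by apply: cont_at_sum => w; exact: cont_at_eval.
case=> [w|i] /=.
  apply: cont_at_max; first exact: cont_at_cst.
  by apply: cont_atD => //; exact: cont_at_eval.
apply: cont_at_sum => w; apply: cont_at_max; first exact: cont_at_cst.
by apply: cont_atB => //; apply: cont_atN; exact: cont_at_eval.
Qed.

Lemma from_to_sphere N x : realization R N x ->
  from_sphere N (to_sphere x) = deform N (1, x).
Proof.
move=> hx; have /realizationP [x0 x1 _] := hx.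
have [c c_gt0 toE] := to_sphereE hx.
have sum_to w :
    to_sphere x w + \sum_w' to_sphere x w' = (x (inl w) - apex_weight x) * c.
  rewrite toE; under eq_bigr do rewrite toE.
  rewrite -mulr_suml sumrB sumr_const -mulr_natl -mulrDl; congr (_ * _).
  by move: x1; rewrite big_sumType /= -/(apex_weight x); have := betaS; lra.
rewrite /from_sphere /deform /=.
have -> : from_sphere_weights N (to_sphere x) = fun v => c * deform_weights N 1 x v.
  apply: funext => -[w|i] /=.
    by rewrite sum_to mul1r maxr_pMr ?ltW // mulr0 mulrC.
  rewrite subrr mul0r add0r mulr_sumr; apply: eq_bigr => w _.
  by rewrite -opprD sum_to mul1r maxr_pMr ?ltW // mulr0 -mulNr opprB mulrC.
by rewrite simplex_projZ // gt_eqF.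
Qed.

Lemma from_sphere_not_antipodal N y (a b : R) :
  covering N -> unit_sphere R W y -> 0 < a -> 0 < b ->
  ~ (forall w, a * (from_sphere N y (inl w) - beta) + b * y w = 0).
Proof.
move=> cov hy a_gt0 b_gt0 hanti.
have /realizationP [_ x1 _] := from_sphere_realization cov hy.
set x := from_sphere N y in x1 hanti; set s := \sum_w y w.
have ab_gt0 : 0 < a * beta by rewrite mulr_gt0 // beta_gt0.
have x_out w : y w + s < 0 -> x (inl w) = 0.
  move=> hw; apply/eqP; rewrite /x /from_sphere /simplex_proj /= -/s mulf_eq0.
  by rewrite eq_maxl ltW.
have y_pos_out w : y w + s < 0 -> 0 < y w.
  move=> /x_out xw; have := hanti w; rewrite xw sub0r mulrN => h.
  by rewrite -(pmulr_rgt0 _ b_gt0); lra.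
(* If some [w] has [y w + s < 0], then [x (inl w) = 0] forces every [y] to be
   positive, which is absurd; otherwise the apices get no weight and summing
   [hanti] gives [s < 0], contradicting [\sum_w (y w + s) >= 0]. *)
have [[w0 hw0]|/forallNP s_low] := pselect (exists w0, y w0 + s < 0).
  have y0 := y_pos_out w0 hw0.
  have y_pos w : 0 < y w by case: (ltP (y w + s) 0) => [/y_pos_out //|]; lra.
  have : y w0 <= s by apply: sumr_ge_term => w; exact: ltW.
  lra.
have s_le w : 0 <= y w + s by rewrite leNgt; apply/negP => /(s_low w).
have tau0 : apex_weight x = 0.
  apply: big1 => i _; rewrite /x /from_sphere /simplex_proj /= -/s.
  rewrite big1 ?mul0r // => w _; apply/eqP; rewrite eq_maxl; have := s_le w; lra.
have sx : \sum_w x (inl w) = 1.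
  by move: x1; rewrite big_sumType /= -/(apex_weight x) tau0 addr0.
have : \sum_w (a * (x (inl w) - beta) + b * y w) = 0.
  by apply: big1 => w _; exact: hanti.
rewrite big_split /= -!mulr_sumr -/s sumrB sx sumr_const -mulr_natl.
have -> : 1 - #|W|%:R * beta = beta by have := betaS; lra.
move=> hsum; have s_neg : s < 0 by rewrite -(pmulr_rlt0 _ b_gt0); lra.
have : 0 <= \sum_w (y w + s) by apply: sumr_ge0 => w _; exact: s_le.
rewrite big_split /= -/s sumr_const -mulr_natl.
have : #|W|%:R * s <= 0 by rewrite mulr_ge0_le0 // ltW.
lra.
Qed.

Lemma lerp_to_from_sphere_neq0 N y t : covering N -> unit_sphere R W y ->
  0 <= t <= 1 -> exists w, lerp t (to_sphere (from_sphere N y)) y w != 0.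
Proof.
move=> cov hy /andP [t0 t1].
have hx := from_sphere_realization cov hy; set x := from_sphere N y in hx *.
have [//|/forallNP hall] := pselect (exists w, lerp t (to_sphere x) y w != 0).
exfalso.
have hz w : lerp t (to_sphere x) y w = 0 by apply/eqP/negPn/negP => /(hall w).
have [c c_gt0 toE] := to_sphereE hx.
have [t_eq0|t_neq0] := eqVneq t 0.
  have [w] := to_sphere_neq0 hx; have := hz w.
  by rewrite t_eq0 lerp0 toE => /eqP; rewrite mulf_eq0 (gt_eqF c_gt0) orbF => ->.
have [t_eq1|t_neq1] := eqVneq t 1.
  move: hy; rewrite /unit_sphere /= big1 => [/eqP|w _].
    by rewrite eq_sym oner_eq0.
  by have := hz w; rewrite t_eq1 lerp1 => ->; rewrite expr0n.
apply: (from_sphere_not_antipodal (a := (1 - t) * c) (b := t) cov hy).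
- by rewrite mulr_gt0 // subr_gt0 lt_neqAle t_neq1.
- by rewrite lt_neqAle eq_sym t_neq0.
- by move=> w; rewrite -(hz w) lerpE toE -/x; ring.
Qed.

Lemma to_from_sphere_homotopic N : covering N ->
  homotopic R (unit_sphere R W) (unit_sphere R W) (to_sphere \o from_sphere N) id.
Proof.
move=> cov.
exists (fun q : R * Y => sphere_proj (lerp q.1 (to_sphere (from_sphere N q.2)) q.2)).
have t01 (t : R) : `[0, 1]%classic t -> 0 <= t <= 1 by rewrite /= in_itv.
split; [split|split].
- apply: continuous_in_subspaceT => q; rewrite in_setE => -[/t01 hq hy].
  apply: (sphere_proj_cont_at
    (u := fun q : R * Y => lerp q.1 (to_sphere (from_sphere N q.2)) q.2)).
    apply: lerp_cont_at; [exact: cont_at_fst | | exact: cvg_snd].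
    apply: (continuous_comp (f := snd) (g := to_sphere \o from_sphere N)).
      exact: cvg_snd.
    apply: continuous_comp; first exact: from_sphere_cont_at.
    exact: to_sphere_cont_at (from_sphere_realization cov hy).
  exact: lerp_to_from_sphere_neq0.
- move=> _ [q [/t01 hq hy] <-].
  exact: sphere_proj_unit (lerp_to_from_sphere_neq0 cov hy hq).
- move=> y hy /=; rewrite lerp0 sphere_proj_id //.
  exact: to_sphere_unit (from_sphere_realization cov hy).
- by move=> y hy /=; rewrite lerp1 sphere_proj_id.
Qed.

Lemma realization_sphere_equiv N : covering N ->
  homotopy_equiv R (realization R N) (unit_sphere R W).
Proof.
move=> cov; exists to_sphere; split.
  split; last by move=> _ [x hx <-]; exact: to_sphere_unit hx.
  apply: continuous_in_subspaceT => x; rewrite in_setE; exact: to_sphere_cont_at.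
exists (from_sphere N); split.
  split; last by move=> _ [y hy <-]; exact: from_sphere_realization.
  apply: continuous_in_subspaceT => y; rewrite in_setE; exact: from_sphere_cont_at.
split; last exact: to_from_sphere_homotopic.
have [H [hH [H0 H1]]] := deform_homotopic (fun i => subxx (N i)) cov.
by exists H; split => //; split => // x hx; rewrite H0 //= from_to_sphere.
Qed.

End Realization.

Unset Implicit Arguments.

Theorem proposition4p2 (R : realType) (W : finType) (r : nat)
  (N : 'I_r -> {set W}) :
  ((\bigcup_(i < r) N i = [set: W])%SET ->
     homotopy_equiv R (realization R N) (unit_sphere R W)) /\
  ((\bigcup_(i < r) N i != [set: W])%SET ->
     homotopy_equiv R (realization R N) (one_point R W)) /\
  (forall M : 'I_r -> {set W},
     (forall i, M i \subset N i) ->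
     (\bigcup_(i < r) M i = [set: W])%SET ->
     homotopy_equivalence R (fun x : {ptws W + 'I_r -> R} => x) (realization R M) (realization R N)).
Proof.
split; first exact: realization_sphere_equiv.
split; last by move=> M; exact: realization_inclusion_equivalence.
by move=> /eqP /not_covering_uncovered [w0 hw0]; exact: uncovered_contractible hw0.
Qed.
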